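(* Let $d\in\mathbb{N}$, $b_0:=1$, $\beta_0:=1$, and let $n_{(0)}:=0\le n_{(1)}\le\cdots\le n_{(d)}$ denote the ordered list of $n_1,\ldots,n_d\in\mathbb{N}_0$. (N) $\mathcal{G}^{\mathcal N,\mathcal E}=\big\{\bar F=\prod_{k=1}^d a_k^{n_{(d-k+1)}}: (a_k)_{k=1}^d \text{ extends to } (a_k)_{k\in\mathbb{N}}\in\mathcal{SM}_\infty\big\}=\big\{\bar F=\prod_{k=1}^d b_k^{n_{(d-k+1)}-n_{(d-k)}}: (b_k)_{k=0}^d\text{ extends to }(b_k)_{k\in\mathbb{N}_0}\in\mathcal{LM}_\infty\big\}.$ (W) $\mathcal{G}^{\mathcal W,\mathcal E}=\big\{\bar F=\prod_{k=1}^d \beta_k^{n_{(d-k+1)}-n_{(d-k)}}: (\beta_k)_{k=0}^d\text{ extends to }(\beta_k)_{k\in\mathbb{N}_0}\in\mathcal{M}_\infty\big\}.$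
   Context: Narrow-sense geometric law: for $p_I\in[0,1]$, $\emptyset\ne I\subseteq\{1,\ldots,m\}$, with $\prod_{I\ni k}p_I<1$, take independent $E_I$ with $\mathbb{P}(E_I>n)=p_I^n$, $\tau_k=\min\{E_I:k\in I\}$. Wide-sense geometric law: for $\tilde p_I\in[0,1]$, $I\subseteq\{1,\ldots,m\}$, $\sum_I\tilde p_I=1$, $\sum_{I\not\ni k}\tilde p_I<1$, run i.i.d. trials with outcome $I$ of probability $\tilde p_I$, $\tilde E_I$ the first trial with outcome $I$, $\tau_k=\min\{\tilde E_I:k\in I\}$. $\mathcal{G}^{\mathcal N,\mathcal E}$ (resp. $\mathcal{G}^{\mathcal W,\mathcal E}$) is the set of survival functions $\mathbb{P}(\tau_1>n_1,\ldots,\tau_d>n_d)$ of $d$-variate laws (for the narrow sense: other than the point mass at $(1,\ldots,1)$) for which there is an infinite exchangeable sequence $(\tau_k)_{k\in\mathbb{N}}$ of $\mathbb{N}$-valued random variables such that $(\tau_1,\ldots,\tau_d)$ has this law and, for every $m\in\mathbb{N}$, $(\tau_1,\ldots,\tau_m)$ has an exchangeable narrow-sense (resp. wide-sense) geometric law. $\nabla^jx_k:=\sum_{i=0}^j(-1)^i\binom{j}{i}x_{k+i}$. $\mathcal{M}_\infty:=\{(x_k)_{k\in\mathbb{N}_0}\in\mathbb{R}^{\mathbb{N}_0}: x_0=1, x_1<1, \nabla^jx_k\ge0\ \forall j,k\in\mathbb{N}_0\}$. $\mathcal{LM}_\infty:=\{(x_k)_{k\in\mathbb{N}_0}\in(0,\infty)^{\mathbb{N}_0}: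 x_0=1,x_1<1,\nabla^j\ln x_k\ge0\ \forall k\in\mathbb{N}_0, j\in\mathbb{N}\}$. $\mathcal{SM}_\infty:=\{(x_k)\in(0,\infty)^{\mathbb{N}_0}: x_0<1, (\ln x_k^{-1})_k \text{ completely monotone, i.e. } \nabla^j\ln x_k^{-1}\ge 0\ \forall j,k\in\mathbb{N}_0\}$ (applied to $(a_k)_{k\ge1}$ after re-indexing from $0$). *)

From Stdlib Require Import Reals.
From mathcomp Require Import all_boot.
Set Implicit Arguments. Unset Strict Implicit. Unset Printing Implicit Defensive.
Open Scope R_scope.

Definition nabla (j : nat) (x : nat -> R) (k : nat) : R :=
  \big[Rplus/0]_(i < j.+1) ((-1) ^ i * INR 'C(j, i) * x (k + i)%N).

Definition Minf (x : nat -> R) : Prop :=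
  x 0%N = 1 /\ (x 1%N < 1) /\ forall j k : nat, (0 <= nabla j x k).

Definition LMinf (x : nat -> R) : Prop :=
  (forall k, 0 < x k) /\ x 0%N = 1 /\ (x 1%N < 1) /\
  forall k j : nat, (0 < j)%N -> (0 <= nabla j (fun i => ln (x i)) k).

(* SM_infinity (sequence indexed from 0) *)
Definition SMinf (x : nat -> R) : Prop :=
  (forall k, 0 < x k) /\ (x 0%N < 1) /\
  forall j k : nat, (0 <= nabla j (fun i => ln (/ x i)) k).

(* Narrow sense: P(tau > n) = prod_{I <> empty} P(E_I > max_{k in I} n_k)
                             = prod_{I <> empty} p_I ^ (max_{k in I} n_k). *)
Definition narrow_params (m : nat) (p : {set 'I_m} -> R) : Prop :=
  (forall I : {set 'I_m}, I != set0 -> (0 <= p I <= 1)) /\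
  (forall k : 'I_m,
      (\big[Rmult/1]_(I : {set 'I_m} | (I != set0) && (k \in I)) p I < 1)).

Definition narrow_surv (m : nat) (p : {set 'I_m} -> R) (n : m.-tuple nat) : R :=
  \big[Rmult/1]_(I : {set 'I_m} | I != set0)
     (p I ^ (\max_(k in I) tnth n k)%N).

Definition is_narrow_geom (m : nat) (S : m.-tuple nat -> R) : Prop :=
  exists p : {set 'I_m} -> R, narrow_params p /\ forall n, S n = narrow_surv p n.

(* Wide sense: i.i.d. trials with outcome I w.p. pt_I; tau_k > n_k iff no trial
   t <= n_k has an outcome containing k; so
   P(tau > n) = prod_{t=1}^{max n} sum_{I : forall k in I, n_k < t} pt_I. *)
Definition wide_params (m : nat) (pt : {set 'I_m} -> R) : Prop :=
  (forall I : {set 'I_m}, (0 <= pt I <= 1)) /\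
  \big[Rplus/0]_(I : {set 'I_m}) pt I = 1 /\
  (forall k : 'I_m, (\big[Rplus/0]_(I : {set 'I_m} | k \notin I) pt I < 1)).

Definition wide_surv (m : nat) (pt : {set 'I_m} -> R) (n : m.-tuple nat) : R :=
  \big[Rmult/1]_(1 <= t < (\max_(k < m) tnth n k)%N.+1)
     (\big[Rplus/0]_(I : {set 'I_m} | [forall k in I, (tnth n k < t)%N]) pt I).

Definition is_wide_geom (m : nat) (S : m.-tuple nat -> R) : Prop :=
  exists pt : {set 'I_m} -> R, wide_params pt /\ forall n, S n = wide_surv pt n.

Definition exchangeable (m : nat) (S : m.-tuple nat -> R) : Prop :=
  forall n n' : m.-tuple nat, perm_eq n n' -> S n = S n'.

(* survival function of the point mass at (1,...,1) *)
Definition pointmass_surv (d : nat) (n : d.-tuple nat) : R :=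
  if all (fun x => x == 0%N) n then 1 else 0.

(* A consistent family (S_m)_{m>=1} of finite-dimensional survival functions
   (laws of (tau_1,...,tau_m)), each exchangeable and of the given geometric type.
   By Kolmogorov's extension theorem this is exactly an infinite exchangeable
   sequence whose m-marginals have exchangeable geometric laws. *)
Definition geom_family (G : forall m, (m.-tuple nat -> R) -> Prop)
    (S : forall m, m.-tuple nat -> R) : Prop :=
  (forall m, (0 < m)%N -> exchangeable (S m) /\ G m (S m)) /\
  (forall m (n : m.-tuple nat), (0 < m)%N -> S m.+1 (rcons_tuple n 0%N) = S m n).

Definition GNE (d : nat) (F : d.-tuple nat -> R) : Prop :=
  ~ (forall n, F n = pointmass_surv n) /\
  exists S, geom_family is_narrow_geom S /\ forall n, F n = S d n.

Definition GWE (d : nat) (F : d.-tuple nat -> R) : Prop :=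
  exists S, geom_family is_wide_geom S /\ forall n, F n = S d n.

(* order statistics: os n 0 = 0 <= os n 1 <= ... <= os n d *)
Definition os (n : seq nat) (j : nat) : nat := nth 0%N (0%N :: sort leq n) j.

Definition RHS_N1 (d : nat) (F : d.-tuple nat -> R) : Prop :=
  exists a : nat -> R, SMinf (fun k => a k.+1) /\
  forall n : d.-tuple nat,
    F n = \big[Rmult/1]_(1 <= k < d.+1) (a k ^ os n (d - k)%N.+1).

Definition RHS_N2 (d : nat) (F : d.-tuple nat -> R) : Prop :=
  exists b : nat -> R, LMinf b /\
  forall n : d.-tuple nat,
    F n = \big[Rmult/1]_(1 <= k < d.+1)
            (b k ^ (os n (d - k).+1 - os n (d - k))%N).

Definition RHS_W (d : nat) (F : d.-tuple nat -> R) : Prop :=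
  exists beta : nat -> R, Minf beta /\
  forall n : d.-tuple nat,
    F n = \big[Rmult/1]_(1 <= k < d.+1)
            (beta k ^ (os n (d - k).+1 - os n (d - k))%N).

From Stdlib Require Import Reals Lra.
From HB Require Import structures.
From mathcomp Require Import all_boot zify.
Set Implicit Arguments. Unset Strict Implicit. Unset Printing Implicit Defensive.
Open Scope R_scope.

(* For n bounded by M, the survival function of a geometric law on N^m is a
   product over the level sets U_t = {k | t <= n_k}, 1 <= t <= M: of the mass
   W(U_t) of the outcomes I disjoint from U_t (wide sense), resp. of the
   product N(U_t) of the p_I over the nonempty I meeting U_t (narrow sense).
   In an exchangeable consistent family, evaluating at indicator vectors gives
   W(U) = b_|U|, resp. N(U) = b_|U|, with b_k = P(tau_1 > 1, ..., tau_k > 1),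
   and the product becomes the order-statistics formula.  By inclusion-exclusion
   over the subsets of the complement of a k-set, nabla^j b_k (resp.
   nabla^j ln b_k, j > 0) is a sum of weights p_I (resp. -ln p_I), hence
   nonnegative; in the narrow sense b_1 = 0 would give the point mass, so b > 0.
   Conversely, binomial inversion shows that p_I = nabla^|I| b_(m-|I|) (resp.
   exp (- nabla^|I| ln b_(m-|I|))) realises a given b.  Finally b_k = a_1 ... a_k
   translates between the two narrow-sense forms. *)

Lemma Rplus_associative : associative Rplus.
Proof. by move=> x y z; rewrite Rplus_assoc. Qed.

Lemma Rmult_associative : associative Rmult.
Proof. by move=> x y z; rewrite Rmult_assoc. Qed.

HB.instance Definition _ :=
  Monoid.isComLaw.Build R 0 Rplus Rplus_associative Rplus_comm Rplus_0_l.
HB.instance Definition _ :=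
  Monoid.isComLaw.Build R 1 Rmult Rmult_associative Rmult_comm Rmult_1_l.
HB.instance Definition _ := Monoid.isMulLaw.Build R 0 Rmult Rmult_0_l Rmult_0_r.
HB.instance Definition _ :=
  Monoid.isAddLaw.Build R Rmult Rplus Rmult_plus_distr_r Rmult_plus_distr_l.

Section RealBigops.

Variables (I : Type) (r : seq I) (P : pred I).

Lemma sumR_opp (F : I -> R) :
  \big[Rplus/0]_(i <- r | P i) - F i = - \big[Rplus/0]_(i <- r | P i) F i.
Proof. by symmetry; apply: (big_morph Ropp) => [x y|]; ring. Qed.

Lemma sumR_ge0 (F : I -> R) :
  (forall i, P i -> 0 <= F i) -> 0 <= \big[Rplus/0]_(i <- r | P i) F i.
Proof. by move=> F_ge0; apply: big_ind => [|x y|//]; lra. Qed.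

Lemma prodR_ge0 (F : I -> R) :
  (forall i, P i -> 0 <= F i) -> 0 <= \big[Rmult/1]_(i <- r | P i) F i.
Proof. by move=> F_ge0; apply: big_ind => [|x y|//]; [lra | nra]. Qed.

Lemma prodR_gt0 (F : I -> R) :
  (forall i, P i -> 0 < F i) -> 0 < \big[Rmult/1]_(i <- r | P i) F i.
Proof. by move=> F_gt0; apply: big_ind => [|x y|//]; [lra | nra]. Qed.

Lemma ln_prodR (F : I -> R) : (forall i, P i -> 0 < F i) ->
  ln (\big[Rmult/1]_(i <- r | P i) F i) = \big[Rplus/0]_(i <- r | P i) ln (F i).
Proof.
move=> F_gt0; suff [] : 0 < \big[Rmult/1]_(i <- r | P i) F i /\
  ln (\big[Rmult/1]_(i <- r | P i) F i) = \big[Rplus/0]_(i <- r | P i) ln (F i) by [].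
apply: (big_rec2 (fun x y => 0 < x /\ ln x = y)); first by split; [lra | exact: ln_1].
move=> i x _ Pi [x_gt0 <-]; have := F_gt0 i Pi; split; first nra.
exact: ln_mult.
Qed.

Lemma exp_sumR (F : I -> R) :
  exp (\big[Rplus/0]_(i <- r | P i) F i) = \big[Rmult/1]_(i <- r | P i) exp (F i).
Proof. by apply: (big_morph exp); [exact: exp_plus | exact: exp_0]. Qed.

End RealBigops.

Lemma ler_sumR_term (T : finType) (P : pred T) (F : T -> R) (j : T) :
  (forall i, P i -> 0 <= F i) -> P j -> F j <= \big[Rplus/0]_(i | P i) F i.
Proof.
move=> F_ge0 Pj; rewrite (bigD1 j) //=.
suff : 0 <= \big[Rplus/0]_(i | P i && (i != j)) F i by lra.
by apply: sumR_ge0 => i /andP[Pi _]; apply: F_ge0.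
Qed.

Lemma prodR_const_nat (m n : nat) (c : R) :
  \big[Rmult/1]_(m <= t < n) c = c ^ (n - m).
Proof. by rewrite big_const_nat; elim: (n - m)%N => //= k ->. Qed.

Lemma sumR_const (T : finType) (P : pred T) (c : R) :
  \big[Rplus/0]_(i | P i) c = INR #|P| * c.
Proof.
transitivity (iter #|P| (Rplus c) 0); first exact: big_const.
elim: #|P| => [|n IH]; first by rewrite /=; ring.
by rewrite iterS IH S_INR; ring.
Qed.

Lemma ln_le0 x : 0 < x <= 1 -> ln x <= 0.
Proof.
move=> [x_gt0 /Rle_lt_or_eq_dec[x_lt1|->]]; last by rewrite ln_1; lra.
by have := ln_increasing _ _ x_gt0 x_lt1; rewrite ln_1; lra.
Qed.

Lemma exp_Ropp_le1 x : 0 <= x -> exp (- x) <= 1.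
Proof.
move=> /Rle_lt_or_eq_dec[x_gt0|<-]; last by rewrite Ropp_0 exp_0; lra.
by have := exp_increasing (- x) 0 ltac:(lra); rewrite exp_0; lra.
Qed.

Lemma nabla0 x k : nabla 0 x k = x k.
Proof. by rewrite /nabla big_ord1 /= addn0; ring. Qed.

Lemma eq_nabla j x y k : (forall i, x i = y i) -> nabla j x k = nabla j y k.
Proof. by move=> exy; apply: eq_bigr => i _; rewrite exy. Qed.

Lemma nablaS j x k : nabla j.+1 x k = nabla j x k - nabla j x k.+1.
Proof.
rewrite /nabla big_ord_recl.
rewrite (eq_bigr (fun i : 'I_j.+1 => (-1) ^ i.+1 * INR 'C(j, i.+1) * x (k + i.+1)%N
   + - ((-1) ^ i * INR 'C(j, i) * x (k.+1 + i)%N))); last first.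
  by move=> i _; rewrite lift0 binS plus_INR addSnnS /=; ring.
rewrite big_split sumR_opp big_ord_recr (bin_small (ltnSn j)).
rewrite [in X in _ = X - _]big_ord_recl.
rewrite (eq_bigr (fun i : 'I_j => (-1) ^ i.+1 * INR 'C(j, i.+1) * x (k + i.+1)%N)
  (P := xpredT) (F1 := fun i : 'I_j => (-1) ^ (lift ord0 i) * INR 'C(j, lift ord0 i)
  * x (k + lift ord0 i)%N)); last by move=> i _; rewrite lift0.
by rewrite /= bin0 [INR 1]/=; ring.
Qed.

Lemma nablaS_diff j y k : nabla j.+1 y k = nabla j (fun i => y i - y i.+1) k.
Proof.
rewrite nablaS /nabla /Rminus -sumR_opp -big_split.
by apply: eq_bigr => i _; rewrite addSn /=; ring.
Qed.

(* Newton's forward formula, read backwards from [s + r]. *)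
Lemma newton_nabla x r s :
  \big[Rplus/0]_(i < r.+1) (INR 'C(r, i) * nabla i x (s + (r - i))%N) = x s.
Proof.
elim: r s => [|r IH] s; first by rewrite big_ord1 nabla0 addn0 /=; ring.
rewrite -(IH s) big_ord_recl.
pose G i := INR 'C(r, i) * nabla i x (s + (r.+1 - i))%N.
have splitS (i : 'I_r.+1) :
    INR 'C(r.+1, lift ord0 i) * nabla (lift ord0 i) x (s + (r.+1 - lift ord0 i))%N
  = G (lift ord0 i)
    + INR 'C(r, i) * (nabla i x (s + (r - i))%N - nabla i x (s + (r - i)).+1).
  by rewrite /G lift0 binS plus_INR subSS nablaS; ring.
rewrite (eq_bigr _ (fun i _ => splitS i)) big_split -Rplus_assoc.
have -> : INR 'C(r.+1, 0) * nabla 0 x (s + (r.+1 - 0))%N = G 0%N by rewrite /G !bin0.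
have -> : G 0%N + \big[Rplus/0]_(i < r.+1) G (lift ord0 i) = \big[Rplus/0]_(i < r.+1) G i.
  rewrite -(big_ord_recl r.+1 (fun i : 'I_r.+2 => G i)) big_ord_recr.
  rewrite [G ord_max]/G (bin_small (ltnSn r)) Rmult_0_l Monoid.mulm1.
  exact: eq_bigr.
rewrite -big_split; apply: eq_bigr => i _.
by rewrite /G subSn 1?addnS /=; [ring | rewrite -ltnS].
Qed.

Lemma sum_subsets_sign (T : finType) (D : {set T}) :
  \big[Rplus/0]_(C : {set T} | C \subset D) (-1) ^ #|C| = if D == set0 then 1 else 0.
Proof.
have [->|[x xD]] := set_0Vmem D.
  rewrite eqxx (eq_bigl (pred1 set0)) => [|C]; last by rewrite subset0.
  by rewrite big_pred1_eq cards0.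
have /negbTE -> : D != set0 by apply/set0Pn; exists x.
(* toggling [x] is a sign-reversing involution on the subsets of [D] *)
pose g (C : {set T}) := if x \in C then C :\ x else x |: C.
have gK : involutive g.
  move=> C; rewrite /g; have [xC|xC] := boolP (x \in C).
    by rewrite setD11 setD1K.
  by rewrite setU11 setU1K.
set S := \big[Rplus/0]_(C | _) _; suff : S = - S by lra.
rewrite {1}/S (reindex_inj (inv_inj gK)) -sumR_opp; apply: eq_big => C.
  rewrite /g; case: ifP => xC; last by rewrite subUset sub1set xD.
  by rewrite subDset (setUidPr _) // sub1set.
move=> _; rewrite /g; case: ifP => xC.
  by rewrite [in RHS](cardsD1 x C) xC add1n /=; lra.
by rewrite cardsU1 xC add1n /=; lra.
Qed.

Lemma sum_subsets_card (T : finType) (D : {set T}) (f : nat -> R) :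
  \big[Rplus/0]_(C : {set T} | C \subset D) f #|C| =
  \big[Rplus/0]_(i < #|D|.+1) (INR 'C(#|D|, i) * f i).
Proof.
have cardD (C : {set T}) : C \subset D -> (#|C| < #|D|.+1)%N.
  by move=> CD; rewrite ltnS; apply: subset_leq_card.
rewrite (partition_big (fun C : {set T} => inord #|C| : 'I_#|D|.+1) xpredT) //.
apply: eq_bigr => i _; rewrite (eq_bigr (fun _ => f i)); last first.
  by move=> C /andP[CD /eqP <-]; rewrite inordK ?cardD.
rewrite sumR_const -cards_draws; congr (INR _ * _); apply: eq_card => C.
rewrite !inE; apply/andP/andP => [[CD /eqP <-]|[CD /eqP Ci]]; split => //.
  by rewrite inordK ?cardD.
by apply/eqP/val_inj; rewrite /= inordK ?cardD.
Qed.

Lemma sum_subsets_sign_disjoint (T : finType) (w : {set T} -> R) (A B : {set T}) :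
  \big[Rplus/0]_(C : {set T} | C \subset B)
     ((-1) ^ #|C| * \big[Rplus/0]_(I : {set T} | [disjoint I & A :|: C]) w I)
  = \big[Rplus/0]_(I : {set T} | [disjoint I & A] && (B \subset I)) w I.
Proof.
have disjU (I C : {set T}) :
    [disjoint I & A :|: C] = [disjoint I & A] && [disjoint I & C].
  by rewrite !disjoints_subset setCU subsetI.
under eq_bigr => C _ do rewrite big_distrr /= big_mkcond.
rewrite exchange_big /= [RHS]big_mkcond; apply: eq_bigr => I _.
rewrite -big_mkcondr -big_distrl /=.
have [IA|IA] /= := boolP [disjoint I & A]; last first.
  by rewrite big_pred0 ?Rmult_0_l // => C; rewrite disjU (negbTE IA) andbF.
rewrite (eq_bigl (fun C : {set T} => C \subset B :\: I)) => [|C]; last first.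
  by rewrite subsetD disjU IA disjoint_sym.
by rewrite sum_subsets_sign setD_eq0; case: ifP => _; ring.
Qed.

Lemma nabla_sum_subsets (T : finType) (A B : {set T}) (f : nat -> R) :
  [disjoint A & B] ->
  \big[Rplus/0]_(C : {set T} | C \subset B) ((-1) ^ #|C| * f #|A :|: C|)
  = nabla #|B| f #|A|.
Proof.
move=> dAB.
rewrite (eq_bigr (fun C : {set T} => (-1) ^ #|C| * f (#|A| + #|C|)%N)) => [|C CB].
  rewrite (sum_subsets_card _ (fun i => (-1) ^ i * f (#|A| + i)%N)).
  by apply: eq_bigr => i _; ring.
by rewrite cardsU (disjoint_setI0 (disjointWr CB dAB)) cards0 subn0.
Qed.

Lemma nabla_sum_disjoint (T : finType) (w : {set T} -> R) (f : nat -> R) (A : {set T}) :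
  (forall U : {set T}, f #|U| = \big[Rplus/0]_(I : {set T} | [disjoint I & U]) w I) ->
  nabla #|~: A| f #|A|
  = \big[Rplus/0]_(I : {set T} | [disjoint I & A] && (~: A \subset I)) w I.
Proof.
move=> fw; rewrite -nabla_sum_subsets ?disjoints_subset ?setCK //.
by under eq_bigr => C _ do rewrite fw; rewrite sum_subsets_sign_disjoint.
Qed.

Lemma disjoint_set0 (T : finType) (I : {set T}) : [disjoint I & set0].
Proof. by rewrite disjoints_subset setC0 subsetT. Qed.

Lemma sum_meet (T : finType) (g : {set T} -> R) (f : nat -> R) (U : {set T}) :
  (forall V : {set T}, \big[Rplus/0]_(I : {set T} | [disjoint I & V]) g I = f #|V|) ->
  \big[Rplus/0]_(I : {set T} | ~~ [disjoint I & U]) g I = f 0%N - f #|U|.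
Proof.
move=> gf; rewrite -gf -(cards0 T) -gf [X in _ = X - _](eq_bigl xpredT) => [|I].
  by rewrite [X in _ = X - _](bigID (fun I : {set T} => [disjoint I & U])) /=; ring.
exact: disjoint_set0.
Qed.

Lemma card_set_ord_le m (A : {set 'I_m}) : (#|A| <= m)%N.
Proof. by rewrite -[X in (_ <= X)%N]card_ord max_card. Qed.

Lemma cardsC_ord m (A : {set 'I_m}) : #|~: A| = (m - #|A|)%N.
Proof. by rewrite cardsCs setCK card_ord. Qed.

Lemma exists_set_card m k : (k <= m)%N -> exists A : {set 'I_m}, #|A| = k.
Proof.
move=> km; exists [set widen_ord km i | i in 'I_k].
by rewrite card_imset ?card_ord // => i i' /(congr1 val) /= /val_inj.
Qed.

Lemma sum_disjoint_nabla m (x : nat -> R) (U : {set 'I_m}) :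
  \big[Rplus/0]_(I : {set 'I_m} | [disjoint I & U]) nabla #|I| x (m - #|I|) = x #|U|.
Proof.
rewrite (eq_bigl (fun I : {set 'I_m} => I \subset ~: U)) => [|I]; last first.
  by rewrite disjoints_subset.
rewrite (sum_subsets_card _ (fun i => nabla i x (m - i))) -[RHS](newton_nabla x (m - #|U|)).
rewrite cardsC_ord; apply: eq_bigr => i _; congr (_ * nabla _ _ _).
move: (card_set_ord_le U) (ltn_ord i); move: (nat_of_ord i) => a; move: #|U| => u; lia.
Qed.

Definition os_prod (h : nat -> R) (m : nat) (s : seq nat) : R :=
  \big[Rmult/1]_(1 <= k < m.+1) (h k ^ (os s (m - k).+1 - os s (m - k))%N).

(* [os_prod] of a sorted [s], read from its smallest entry, with the spacings
   measured from [base] ([os] puts [0] below the smallest entry). *)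
Fixpoint spacing_prod (h : nat -> R) (base : nat) (s : seq nat) : R :=
  if s is x :: s' then h (size s').+1 ^ (x - base) * spacing_prod h x s' else 1.

Lemma spacing_prodE h base s :
  \big[Rmult/1]_(1 <= k < (size s).+1)
     (h k ^ (nth 0%N (base :: s) (size s - k).+1 - nth 0%N (base :: s) (size s - k))%N)
  = spacing_prod h base s.
Proof.
elim: s base => [|x s IH] base /=; first by rewrite big_geq.
rewrite big_nat_recr //= subnn Rmult_comm -(IH x); congr (_ * _).
by apply: eq_big_nat => k /andP[_ ks]; rewrite subSn.
Qed.

Lemma os_prod_spacing h s : os_prod h (size s) s = spacing_prod h 0 (sort leq s).
Proof. by rewrite /os_prod /os -spacing_prodE size_sort. Qed.

Lemma spacing_prod_count h base M s : h 0%N = 1 -> path leq base s ->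
  all (leq^~ M) s -> (base <= M)%N ->
  \big[Rmult/1]_(base.+1 <= t < M.+1) h (count (leq t) s) = spacing_prod h base s.
Proof.
move=> h0; elim: s base => [|x s IH] base /=.
  by move=> _ _ _; rewrite big1.
move=> /andP[bx xs] /andP[xM sM] bM.
rewrite (big_cat_nat _ (n := x.+1)) // -(IH x) //; congr (_ * _).
  rewrite (eq_big_nat _ _ (F2 := fun _ => h (size s).+1)) => [|t /andP[_ tx]].
    by rewrite prodR_const_nat subSS.
  rewrite ltnS in tx; rewrite tx add1n; congr (h _.+1).
  apply/eqP; rewrite -all_count; apply/allP => y ys.
  by apply: leq_trans tx _; move/allP: (order_path_min leq_trans xs); apply.
by apply: eq_big_nat => t /andP[xt _]; rewrite leqNgt xt.
Qed.

Lemma os_prod_count h m M s : h 0%N = 1 -> size s = m -> all (leq^~ M) s ->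
  os_prod h m s = \big[Rmult/1]_(1 <= t < M.+1) h (count (leq t) s).
Proof.
move=> h0 <- sM; rewrite os_prod_spacing -(spacing_prod_count (M := M) h0) //.
- by apply: eq_bigr => t _; congr h; apply/permP; rewrite perm_sort.
- by rewrite path_min_sorted ?sort_sorted //; [exact: leq_total | apply/allP].
- by rewrite all_sort.
Qed.

Lemma os_prod_perm h m s s' : perm_eq s s' -> os_prod h m s = os_prod h m s'.
Proof.
move=> ss'; rewrite /os_prod /os.
by rewrite (perm_sortP leq_total leq_trans anti_leq _ _ ss').
Qed.

Lemma all_leq_sumn s : all (leq^~ (sumn s)) s.
Proof.
apply/allP; elim: s => //= x s IH y; rewrite in_cons => /orP[/eqP->|ys].
  exact: leq_addr.
exact: leq_trans (IH y ys) (leq_addl _ _).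
Qed.

Lemma os_prod_rcons0 h m s : h 0%N = 1 -> size s = m ->
  os_prod h m.+1 (rcons s 0%N) = os_prod h m s.
Proof.
move=> h0 sm; have sM := all_leq_sumn s.
rewrite (os_prod_count (M := sumn s) h0) ?size_rcons ?sm //; last first.
  by rewrite all_rcons sM.
rewrite (os_prod_count (M := sumn s) h0) //; apply: eq_big_nat => t /andP[t1 _].
by rewrite -cats1 count_cat /= leqNgt t1 /= !addn0.
Qed.

Definition partial_prod (a : nat -> R) (k : nat) : R := \big[Rmult/1]_(1 <= i < k.+1) a i.

Lemma partial_prod0 a : partial_prod a 0 = 1.
Proof. by rewrite /partial_prod big_geq. Qed.

Lemma partial_prodS a k : partial_prod a k.+1 = partial_prod a k * a k.+1.
Proof. by rewrite /partial_prod big_nat_recr. Qed.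

Lemma spacing_prod_partial a base s : path leq base s ->
  spacing_prod (partial_prod a) base s * partial_prod a (size s) ^ base
  = \big[Rmult/1]_(1 <= k < (size s).+1) (a k ^ nth 0%N s (size s - k)).
Proof.
elim: s base => [|x s IH] base /=.
  by move=> _; rewrite partial_prod0 pow1 big_geq //; ring.
move=> /andP[bx xs]; rewrite big_nat_recr //= subnn.
rewrite (eq_big_nat _ _ (F2 := fun k => a k ^ nth 0%N s (size s - k))); last first.
  by move=> k /andP[_ ks]; rewrite subSn.
rewrite -(IH x xs).
transitivity (spacing_prod (partial_prod a) x s
              * partial_prod a (size s).+1 ^ (x - base + base)).
  by rewrite pow_add; ring.
by rewrite subnK // partial_prodS Rpow_mult_distr /=; ring.
Qed.

Lemma os_prod_partial a d (n : d.-tuple nat) :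
  os_prod (partial_prod a) d n
  = \big[Rmult/1]_(1 <= k < d.+1) (a k ^ os n (d - k).+1).
Proof.
rewrite -{1}(size_tuple n) os_prod_spacing.
rewrite -[LHS]Rmult_1_r -(pow_O (partial_prod a (size (sort leq n)))).
rewrite spacing_prod_partial; last first.
  by rewrite path_min_sorted ?sort_sorted //; [exact: leq_total | apply/allP].
by rewrite size_sort size_tuple.
Qed.

Lemma pow_indicator_prod (c : R) e M : (e <= M)%N ->
  c ^ e = \big[Rmult/1]_(1 <= t < M.+1) (if (t <= e)%N then c else 1).
Proof.
move=> eM; rewrite (big_cat_nat _ (n := e.+1)) //= [X in _ = _ * X]big_nat_cond.
rewrite [X in _ = _ * X]big1 => [|t /andP[/andP[et _] _]]; last by rewrite leqNgt et.
rewrite Rmult_1_r (eq_big_nat _ _ (F2 := fun _ => c)) ?prodR_const_nat ?subn1 //.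
by move=> t /andP[_ te]; rewrite -ltnS te.
Qed.

Lemma leq_bigmax_disjoint (T : finType) (I : {set T}) (F : T -> nat) t : (0 < t)%N ->
  (t <= \max_(k in I) F k)%N = ~~ [disjoint I & [set k | t <= F k]%N].
Proof.
case: t => // t _; rewrite ltnNge disjoints_subset; congr negb.
apply/bigmax_leqP/subsetP => [Ft k kI|Ft k kI].
  by rewrite !inE -ltnNge ltnS Ft.
by move: (Ft k kI); rewrite !inE -ltnNge ltnS.
Qed.

Section LevelSets.

Variable m : nat.
Implicit Types (n : m.-tuple nat) (U I : {set 'I_m}).

Definition level_set n (t : nat) : {set 'I_m} := [set k | (t <= tnth n k)%N].

Lemma card_level_set n t : #|level_set n t| = count (leq t) n.
Proof.
rewrite -[in RHS](map_tnth_enum n) count_map -size_filter enumT cardE /enum_mem.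
by congr size; apply: eq_filter => k; rewrite !inE.
Qed.

Lemma level_set_gt n t : (\max_(k < m) tnth n k < t)%N -> level_set n t = set0.
Proof.
move=> nt; apply/setP => k; rewrite !inE; apply/negbTE; rewrite -ltnNge.
exact: leq_ltn_trans (leq_bigmax k) nt.
Qed.

Definition level_form (S : m.-tuple nat -> R) (L : {set 'I_m} -> R) : Prop :=
  forall n M, all (leq^~ M) n ->
  S n = \big[Rmult/1]_(1 <= t < M.+1) L (level_set n t).

Lemma level_form_os_prod S L h : level_form S L -> h 0%N = 1 ->
  (forall U, L U = h #|U|) -> forall n, S n = os_prod h m n.
Proof.
move=> SL h0 Lh n; rewrite (SL n (sumn n)) ?all_leq_sumn //.
rewrite (os_prod_count h0 (size_tuple n) (all_leq_sumn n)).
by apply: eq_bigr => t _; rewrite Lh card_level_set.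
Qed.

Definition indicator U : m.-tuple nat := [tuple nat_of_bool (k \in U) | k < m].

Lemma perm_indicator U :
  perm_eq (indicator U) (nseq #|U| 1%N ++ nseq #|~: U| 0%N).
Proof.
have map_constU (A : {set 'I_m}) b : {in A, forall k, nat_of_bool (k \in U) = b} ->
    [seq nat_of_bool (k \in U) | k <- enum A] = nseq #|A| b.
  move=> Ab; rewrite cardE -(size_map (fun k => nat_of_bool (k \in U))).
  by apply/all_pred1P; rewrite all_map; apply/allP => k; rewrite mem_enum /= => /Ab ->.
rewrite -(map_constU U 1%N) => [|k ->] //.
rewrite -(map_constU (~: U) 0%N) => [|k]; last by rewrite inE => /negbTE ->.
rewrite -map_cat -[indicator U : seq nat]map_tnth_enum.
rewrite (eq_map (g := fun k => nat_of_bool (k \in U))) => [|k]; last first.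
  by rewrite tnth_mktuple.
rewrite perm_map // uniq_perm ?enum_uniq // => [|k]; last first.
  by rewrite mem_cat !mem_enum !inE orbN.
rewrite cat_uniq !enum_uniq andbT /=; apply/hasPn => k.
by rewrite !mem_enum inE.
Qed.

Lemma level_form_indicator S L U : level_form S L -> S (indicator U) = L U.
Proof.
move=> SL; rewrite (SL _ 1%N) ?big_nat1; last first.
  by apply/allP => _ /mapP[k _ ->]; case: (k \in U).
by congr L; apply/setP => k; rewrite !inE tnth_mktuple; case: (k \in U).
Qed.

Definition wide_surv1 (pt : {set 'I_m} -> R) U : R :=
  \big[Rplus/0]_(I : {set 'I_m} | [disjoint I & U]) pt I.

Definition narrow_surv1 (p : {set 'I_m} -> R) U : R :=
  \big[Rmult/1]_(I : {set 'I_m} | (I != set0) && ~~ [disjoint I & U]) p I.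

Lemma wide_surv1_set0 pt : wide_surv1 pt set0 = \big[Rplus/0]_(I : {set 'I_m}) pt I.
Proof. by apply: eq_bigl => I; rewrite disjoint_set0. Qed.

Lemma wide_surv1_set1 pt k :
  wide_surv1 pt [set k] = \big[Rplus/0]_(I : {set 'I_m} | k \notin I) pt I.
Proof. by apply: eq_bigl => I; rewrite disjoint_sym disjoints1. Qed.

Lemma narrow_surv1_set0 p : narrow_surv1 p set0 = 1.
Proof. by rewrite /narrow_surv1 big_pred0 // => I; rewrite disjoint_set0 andbF. Qed.

Lemma narrow_surv1_set1 p k : narrow_surv1 p [set k]
  = \big[Rmult/1]_(I : {set 'I_m} | (I != set0) && (k \in I)) p I.
Proof. by apply: eq_bigl => I; rewrite disjoint_sym disjoints1 negbK. Qed.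

Lemma wide_surv_level_form pt : \big[Rplus/0]_(I : {set 'I_m}) pt I = 1 ->
  level_form (wide_surv pt) (wide_surv1 pt).
Proof.
move=> pt1 n M nM; have nM' k : (tnth n k <= M)%N by apply: (allP nM); exact: mem_tnth.
have maxM : (\max_(k < m) tnth n k <= M)%N by apply/bigmax_leqP => k _.
rewrite /wide_surv [RHS](big_cat_nat _ (n := (\max_(k < m) tnth n k).+1)) //=.
rewrite [X in _ = _ * X]big_nat_cond [X in _ = _ * X]big1 ?Rmult_1_r; last first.
  move=> t /andP[/andP[nt _] _]; rewrite level_set_gt // /wide_surv1.
  by rewrite (eq_bigl xpredT) // => I; rewrite disjoint_set0.
apply: eq_bigr => t _; apply: eq_bigl => I; rewrite disjoints_subset.
apply/forall_inP/subsetP => lt_nt k kI.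
  by rewrite !inE -ltnNge lt_nt.
by move: (lt_nt k kI); rewrite !inE -ltnNge.
Qed.

Lemma narrow_surv_level_form p : level_form (narrow_surv p) (narrow_surv1 p).
Proof.
move=> n M nM; rewrite /narrow_surv.
rewrite (eq_bigr (fun I => \big[Rmult/1]_(1 <= t < M.+1)
  (if (t <= \max_(k in I) tnth n k)%N then p I else 1))) => [|I _]; last first.
  apply: pow_indicator_prod; apply/bigmax_leqP => k _.
  by apply: (allP nM); exact: mem_tnth.
rewrite exchange_big /=; apply: eq_big_nat => t /andP[t1 _].
rewrite /narrow_surv1 -big_mkcondr; apply: eq_bigl => I.
by rewrite leq_bigmax_disjoint.
Qed.

End LevelSets.

Section ConsistentFamilies.

Variables (G : forall m, (m.-tuple nat -> R) -> Prop) (S : forall m, m.-tuple nat -> R).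
Arguments S : clear implicits.
Hypothesis famS : geom_family G S.

Definition surv_seq (s : seq nat) : R := S (size s) (in_tuple s).

Lemma surv_seqE m (n : m.-tuple nat) : S m n = surv_seq n.
Proof.
case: n => s sz; rewrite /surv_seq /=; have sm : size s = m by apply/eqP.
by subst m; congr (S _ _); apply: val_inj.
Qed.

Lemma surv_seq_perm s s' : (0 < size s)%N -> perm_eq s s' -> surv_seq s = surv_seq s'.
Proof.
move=> s_gt0 ss'; have sz' : size s' == size s by rewrite (perm_size ss').
by rewrite /surv_seq ((famS.1 _ s_gt0).1 (in_tuple s) (Tuple sz') ss') surv_seqE.
Qed.

Lemma surv_seq_rcons0 s : (0 < size s)%N -> surv_seq (rcons s 0%N) = surv_seq s.
Proof. by move=> s_gt0; have := famS.2 _ (in_tuple s) s_gt0; rewrite surv_seqE. Qed.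

(* [surv_ones k] is P(tau_1 > 1, ..., tau_k > 1), the [b_k] of the paper. *)
Definition surv_ones (k : nat) : R := surv_seq (rcons (nseq k 1%N) 0%N).

Lemma surv_seq_ones_zeros k j : surv_seq (nseq k 1%N ++ nseq j.+1 0%N) = surv_ones k.
Proof.
elim: j => [|j IH]; first by rewrite cats1.
rewrite -(addn1 j.+1) nseqD catA cats1 surv_seq_rcons0 // size_cat !size_nseq; lia.
Qed.

Lemma surv_indicator m (U : {set 'I_m}) : (0 < m)%N -> S m (indicator U) = surv_ones #|U|.
Proof.
move=> m_gt0; rewrite surv_seqE (surv_seq_perm _ (perm_indicator U)) ?size_tuple //.
have Um := card_set_ord_le U.
rewrite cardsC_ord; case def_j: (m - #|U|)%N => [|j]; last exact: surv_seq_ones_zeros.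
by rewrite cats0 /surv_ones surv_seq_rcons0 // size_nseq; lia.
Qed.

Lemma level_form_surv_ones m L : (0 < m)%N -> level_form (S m) L ->
  forall U, L U = surv_ones #|U|.
Proof. by move=> m_gt0 SL U; rewrite -(level_form_indicator U SL) surv_indicator. Qed.

End ConsistentFamilies.

Lemma os_prod_family (G : forall m, (m.-tuple nat -> R) -> Prop) h : h 0%N = 1 ->
  (forall m, (0 < m)%N -> G m (fun n => os_prod h m n)) ->
  geom_family G (fun m (n : m.-tuple nat) => os_prod h m n).
Proof.
move=> h0 Gh; split=> [m m_gt0|m n _]; last exact: os_prod_rcons0 (size_tuple n).
by split=> [n n' /os_prod_perm|]; [apply | exact: Gh].
Qed.

Lemma os_prod_ones h d : h 0%N = 1 -> os_prod h d (nseq d 1%N) = h d.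
Proof.
move=> h0; rewrite (os_prod_count (M := 1) h0) ?size_nseq ?all_nseq ?orbT //.
by rewrite big_nat1 count_nseq mul1n.
Qed.

Lemma os_prod_pointmass h d (n : d.-tuple nat) : h 0%N = 1 ->
  (forall c, (0 < c)%N -> h c = 0) -> os_prod h d n = pointmass_surv n.
Proof.
move=> h0 h_gt0; rewrite /pointmass_surv; case: ifP => [n0 | /negbT/allPn[x xn x_gt0]].
  rewrite (os_prod_count (M := 0) h0 (size_tuple n)) ?big_geq //.
  by rewrite (eq_all (a2 := fun x => x == 0%N)) // => x; rewrite leqn0.
have sum_gt0 : (0 < sumn n)%N.
  by apply: leq_trans (allP (all_leq_sumn n) x xn); rewrite lt0n.
rewrite (os_prod_count h0 (size_tuple n) (all_leq_sumn n)) big_ltn ?ltnS //.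
rewrite h_gt0 ?Rmult_0_l // -has_count; apply/hasP; exists x => //.
by rewrite lt0n.
Qed.

Lemma nabla_ge0_disjoint_sums k j (w : {set 'I_(k + j)} -> R) (f : nat -> R) :
  (forall U : {set 'I_(k + j)},
     f #|U| = \big[Rplus/0]_(I : {set 'I_(k + j)} | [disjoint I & U]) w I) ->
  (forall I : {set 'I_(k + j)}, (j <= #|I|)%N -> 0 <= w I) ->
  0 <= nabla j f k.
Proof.
move=> fw w_ge0; have [A cardA] := exists_set_card (leq_addr j k).
have cardAC : #|~: A| = j by rewrite cardsC_ord cardA addKn.
have := nabla_sum_disjoint A fw; rewrite cardA cardAC => ->.
apply: sumR_ge0 => I /andP[_ AI].
by apply: w_ge0; move: (subset_leq_card AI); rewrite cardAC.
Qed.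

Lemma family_os_prod G S m L : geom_family G S -> (0 < m)%N ->
  level_form (S m) L -> surv_ones S 0 = 1 ->
  forall n, S m n = os_prod (surv_ones S) m n.
Proof.
move=> famS m_gt0 SL b0; apply: (level_form_os_prod SL b0).
exact (level_form_surv_ones famS m_gt0 SL).
Qed.

Lemma wide_family_level_form S m : geom_family is_wide_geom S -> (0 < m)%N ->
  exists2 pt : {set 'I_m} -> R, wide_params pt & level_form (S m) (wide_surv1 pt).
Proof.
move=> famS m_gt0; have [pt [ptP Spt]] := (famS.1 m m_gt0).2.
by exists pt => // n M nM; rewrite Spt; apply: wide_surv_level_form ptP.2.1 _ _ nM.
Qed.

Lemma wide_family_params S m : geom_family is_wide_geom S -> (0 < m)%N ->
  exists2 pt : {set 'I_m} -> R,
    wide_params pt & forall U, wide_surv1 pt U = surv_ones S #|U|.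
Proof.
move=> famS m_gt0; have [pt ptP SL] := wide_family_level_form famS m_gt0.
by exists pt => //; exact (level_form_surv_ones famS m_gt0 SL).
Qed.

Lemma GWE_RHS_W d (hd : (0 < d)%N) (F : d.-tuple nat -> R) : GWE F -> RHS_W F.
Proof.
move=> [S [famS FS]].
have [pt1 pt1P pt1b] := wide_family_params famS (ltn0Sn 0).
have b0 : surv_ones S 0%N = 1 by rewrite -(cards0 'I_1) -pt1b wide_surv1_set0 pt1P.2.1.
exists (surv_ones S); split; [split; [|split] |].
- exact: b0.
- by rewrite -(cards1 (ord0 : 'I_1)) -pt1b wide_surv1_set1; exact: pt1P.2.2.
- move=> j k; have [/eqP|kj_gt0] := posnP (k + j).
    by rewrite addn_eq0 => /andP[/eqP-> /eqP->]; rewrite nabla0 b0; lra.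
  have [pt ptP ptb] := wide_family_params famS kj_gt0.
  apply: (nabla_ge0_disjoint_sums (w := pt)) => [U|I _]; first by rewrite -ptb.
  exact: (ptP.1 I).1.
- have [pt _ SL] := wide_family_level_form famS hd.
  by move=> n; rewrite FS (family_os_prod famS hd SL b0).
Qed.

Lemma RHS_W_GWE d (F : d.-tuple nat -> R) : RHS_W F -> GWE F.
Proof.
move=> [b [[b0 [b1 b_cm]] Fb]].
exists (fun m (n : m.-tuple nat) => os_prod b m n); split => //.
apply: (os_prod_family b0) => m _.
pose pt (I : {set 'I_m}) := nabla #|I| b (m - #|I|).
have ptb U : wide_surv1 pt U = b #|U| by exact: sum_disjoint_nabla.
have pt1 : \big[Rplus/0]_(I : {set 'I_m}) pt I = 1 by rewrite -wide_surv1_set0 ptb cards0.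
exists pt; split; last first.
  by move=> n; rewrite (level_form_os_prod (wide_surv_level_form pt1) b0 ptb).
split; [move=> I; split | split=> // k].
- exact: b_cm.
- by rewrite -pt1; apply: ler_sumR_term => // J _; exact: b_cm.
- by rewrite -wide_surv1_set1 ptb cards1.
Qed.

Section NarrowParameters.

Variable m : nat.
Implicit Types (p : {set 'I_m} -> R) (U I : {set 'I_m}).

Lemma narrow_surv1_split p U k : k \in U ->
  narrow_surv1 p U = narrow_surv1 p [set k] *
    \big[Rmult/1]_(I : {set 'I_m} | (I != set0) && ~~ [disjoint I & U] && (k \notin I)) p I.
Proof.
move=> kU; rewrite narrow_surv1_set1 /narrow_surv1.
rewrite (bigID (fun I : {set 'I_m} => k \in I)) /=; congr (_ * _).
apply: eq_bigl => I; have [kI|] := boolP (k \in I); rewrite ?andbF ?andbT //.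
suff -> : ~~ [disjoint I & U] by rewrite andbT.
by apply/negP; rewrite disjoints_subset => /subsetP/(_ k kI); rewrite inE kU.
Qed.

Lemma narrow_param_gt0 p (b : nat -> R) : narrow_params p ->
  (forall U, narrow_surv1 p U = b #|U|) -> 0 < b 1%N -> forall I, I != set0 -> 0 < p I.
Proof.
move=> pP pb b1_gt0 I I0; have [k kI] := set0Pn I I0.
case/Rle_lt_or_eq_dec: (pP.1 I I0).1 => // pI0; move: b1_gt0.
rewrite -(cards1 k) -pb narrow_surv1_set1 (bigD1 I) /=; last by rewrite I0 kI.
by rewrite -pI0 Rmult_0_l; lra.
Qed.

(* [ln] turns the narrow survival function into a sum over disjoint sets as
   for the wide sense, with the (non-positive) weight of [set0] absorbing the
   total mass. *)
Lemma ln_narrow_surv1 p U : (forall I, I != set0 -> 0 < p I) ->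
  ln (narrow_surv1 p U) = \big[Rplus/0]_(I : {set 'I_m} | [disjoint I & U])
    (if I == set0 then \big[Rplus/0]_(J : {set 'I_m} | J != set0) ln (p J)
     else - ln (p I)).
Proof.
move=> p_gt0; rewrite /narrow_surv1 ln_prodR => [|I /andP[I0 _]]; last exact: p_gt0.
rewrite [RHS](bigD1 set0) /= ?eqxx; last by rewrite disjoints_subset sub0set.
set K := \big[Rplus/0]_(J : {set 'I_m} | J != set0) ln (p J).
rewrite [X in _ = _ + X](eq_bigr (fun I => - ln (p I))) => [|I /andP[_ /negbTE->] //].
rewrite sumR_opp [X in _ = _ + - X](eq_bigl (fun I => (I != set0) && [disjoint I & U])).
  by rewrite /K (bigID (fun I => [disjoint I & U]) (fun I => I != set0)) /=; ring.
by move=> I; rewrite andbC.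
Qed.

Lemma narrow_surv1_exp_nabla (b : nat -> R) U : (forall k, 0 < b k) -> b 0%N = 1 ->
  narrow_surv1 (fun I => exp (- nabla #|I| (fun i => ln (b i)) (m - #|I|))) U = b #|U|.
Proof.
move=> b_gt0 b0; rewrite /narrow_surv1 -exp_sumR sumR_opp.
rewrite (eq_bigl (fun I : {set 'I_m} => ~~ [disjoint I & U])) /= => [|I]; last first.
  by have [->|] := eqVneq I set0; rewrite ?disjoints_subset ?sub0set.
rewrite (sum_meet U (sum_disjoint_nabla (fun i => ln (b i)))) b0 ln_1.
by rewrite Rminus_0_l Ropp_involutive exp_ln.
Qed.

End NarrowParameters.

Lemma narrow_family_level_form S m : geom_family is_narrow_geom S -> (0 < m)%N ->
  exists2 p : {set 'I_m} -> R, narrow_params p & level_form (S m) (narrow_surv1 p).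
Proof.
move=> famS m_gt0; have [p [pP Sp]] := (famS.1 m m_gt0).2.
by exists p => // n M nM; rewrite Sp; apply: narrow_surv_level_form.
Qed.

Lemma narrow_family_params S m : geom_family is_narrow_geom S -> (0 < m)%N ->
  exists2 p : {set 'I_m} -> R,
    narrow_params p & forall U, narrow_surv1 p U = surv_ones S #|U|.
Proof.
move=> famS m_gt0; have [p pP SL] := narrow_family_level_form famS m_gt0.
by exists p => //; exact (level_form_surv_ones famS m_gt0 SL).
Qed.

Lemma GNE_RHS_N2 d (hd : (0 < d)%N) (F : d.-tuple nat -> R) : GNE F -> RHS_N2 F.
Proof.
move=> [not_pm [S [famS FS]]].
have [p1 p1P p1b] := narrow_family_params famS (ltn0Sn 0).
have b0 : surv_ones S 0%N = 1 by rewrite -(cards0 'I_1) -p1b narrow_surv1_set0.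
have Fb n : F n = os_prod (surv_ones S) d n.
  have [p _ SL] := narrow_family_level_form famS hd.
  by rewrite FS (family_os_prod famS hd SL b0).
(* [surv_ones S 1 = 0] would force [surv_ones S c = 0] for all [c > 0],
   i.e. the point mass. *)
have b1_gt0 : 0 < surv_ones S 1%N.
  have : 0 <= surv_ones S 1%N.
    rewrite -(cards1 (ord0 : 'I_1)) -p1b.
    by apply: prodR_ge0 => I /andP[I0 _]; exact: (p1P.1 I I0).1.
  case/Rle_lt_or_eq_dec => // b10; case: not_pm => n.
  rewrite Fb; apply: os_prod_pointmass b0 _ => c c_gt0.
  have [q _ qb] := narrow_family_params famS c_gt0; pose k : 'I_c := Ordinal c_gt0.
  rewrite -[c]card_ord -cardsT -qb (narrow_surv1_split _ (in_setT k)).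
  by rewrite qb cards1 -b10 Rmult_0_l.
exists (surv_ones S); split; [split; [|split; [|split]] | exact: Fb].
- case=> [|c]; first by rewrite b0; lra.
  have [p pP pb] := narrow_family_params famS (ltn0Sn c).
  rewrite -[c.+1]card_ord -cardsT -pb.
  by apply: prodR_gt0 => I /andP[I0 _]; exact: narrow_param_gt0 pP pb b1_gt0 I I0.
- exact: b0.
- by rewrite -(cards1 (ord0 : 'I_1)) -p1b narrow_surv1_set1; exact: p1P.2.
- move=> k j j_gt0; have [p pP pb] := narrow_family_params famS (ltn_addl k j_gt0).
  have p_gt0 := narrow_param_gt0 pP pb b1_gt0.
  apply: nabla_ge0_disjoint_sums => [U|I jI]; first by rewrite -pb ln_narrow_surv1.
  have I0 : I != set0 by rewrite -card_gt0 (leq_trans j_gt0 jI).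
  by rewrite (negbTE I0); have := ln_le0 (conj (p_gt0 I I0) (pP.1 I I0).2); lra.
Qed.

Lemma RHS_N2_GNE d (hd : (0 < d)%N) (F : d.-tuple nat -> R) : RHS_N2 F -> GNE F.
Proof.
move=> [b [[b_gt0 [b0 [b1 lnb_cm]]] Fb]]; split.
  move=> /(_ (nseq_tuple d 1%N)); rewrite Fb /pointmass_surv all_nseq /=.
  rewrite (negbTE (lt0n_neq0 hd)) -/(os_prod b d (nseq d 1%N)) os_prod_ones //.
  by rewrite /=; have := b_gt0 d; lra.
exists (fun m (n : m.-tuple nat) => os_prod b m n); split => //.
apply: (os_prod_family b0) => m _.
pose p (I : {set 'I_m}) := exp (- nabla #|I| (fun i => ln (b i)) (m - #|I|)).
have pb U : narrow_surv1 p U = b #|U| by exact: narrow_surv1_exp_nabla.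
exists p; split; last first.
  by move=> n; rewrite (level_form_os_prod (narrow_surv_level_form p) b0 pb).
split=> [I I0 | k]; last by rewrite -narrow_surv1_set1 pb cards1.
split; first exact/Rlt_le/exp_pos.
by apply: exp_Ropp_le1; apply: lnb_cm; rewrite card_gt0.
Qed.

Lemma RHS_N1_N2 d (F : d.-tuple nat -> R) : RHS_N1 F -> RHS_N2 F.
Proof.
move=> [a [[a_gt0 [a1 lna_cm]] Fa]].
have pa_gt0 k : 0 < partial_prod a k.
  rewrite /partial_prod big_nat_cond; apply: prodR_gt0 => i /andP[/andP[i_gt0 _] _].
  by have := a_gt0 i.-1; rewrite prednK.
exists (partial_prod a); split; last by move=> n; rewrite Fa -os_prod_partial.
split; [done | split; [exact: partial_prod0 | split]].
  by rewrite partial_prodS partial_prod0 Rmult_1_l.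
move=> k [|j] // _; rewrite nablaS_diff (eq_nabla _ (y := fun i => ln (/ a i.+1))).
  exact: lna_cm.
by move=> i; rewrite partial_prodS ln_mult ?ln_Rinv //; ring.
Qed.

Lemma RHS_N2_N1 d (F : d.-tuple nat -> R) : RHS_N2 F -> RHS_N1 F.
Proof.
move=> [b [[b_gt0 [b0 [b1 lnb_cm]]] Fb]]; pose a k := b k / b k.-1.
have pa k : partial_prod a k = b k.
  elim: k => [|k IH]; first by rewrite partial_prod0 b0.
  by rewrite partial_prodS IH /a /=; field; have := b_gt0 k; lra.
exists a; split; last first.
  by move=> n; rewrite Fb -os_prod_partial; apply: eq_bigr => k _; rewrite pa.
split; [move=> k; exact: Rdiv_lt_0_compat | split].
  by rewrite /a /= b0 Rdiv_1_r.
move=> j k; have := lnb_cm k j.+1 isT; rewrite nablaS_diff.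
rewrite (eq_nabla _ (y := fun i => ln (/ a i.+1))) // => i.
have := b_gt0 i; have := b_gt0 i.+1 => bi1 bi.
by rewrite /a /= Rinv_div /Rdiv ln_mult ?ln_Rinv //; exact: Rinv_0_lt_compat.
Qed.

Unset Implicit Arguments.

Theorem corollary4p1 (d : nat) (hd : (0 < d)%N) :
  (forall F : d.-tuple nat -> R, GNE F <-> RHS_N1 F) /\
  (forall F : d.-tuple nat -> R, GNE F <-> RHS_N2 F) /\
  (forall F : d.-tuple nat -> R, GWE F <-> RHS_W F).
Proof.
have GNE_N2 (F : d.-tuple nat -> R) : GNE F <-> RHS_N2 F.
  by split; [exact: GNE_RHS_N2 | exact: RHS_N2_GNE].
have N2_N1 (F : d.-tuple nat -> R) : RHS_N2 F <-> RHS_N1 F.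
  by split; [exact: RHS_N2_N1 | exact: RHS_N1_N2].
split; [|split] => F; first exact: iff_trans (GNE_N2 F) (N2_N1 F).
  exact: GNE_N2.
by split; [exact: GWE_RHS_W | exact: RHS_W_GWE].
Qed.
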